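(* Up to natural isomorphism, the external tensor product $$\boxtimes:\mathrm{Fam}_{\mathbb{C}}\times\mathrm{Fam}_{\mathbb{C}}\to\mathrm{Fam}_{\mathbb{C}},\qquad (\mathscr V_X\boxtimes\mathscr V'_{X'})_{(x,x')}:=\mathscr V_x\otimes_{\mathbb C}\mathscr V'_{x'}$$ (over the base $X\times X'$, acting on morphisms by $(\phi_f,\phi'_{f'})\mapsto(\phi_x\otimes\phi'_{x'})_{f\times f'}$) is the unique functor $F:\mathrm{Fam}_{\mathbb{C}}\times\mathrm{Fam}_{\mathbb{C}}\to\mathrm{Fam}_{\mathbb{C}}$ such that: (i) $F$ distributes over set-indexed coproducts in each variable separately, i.e. for every set $I$, every family $(A_i)_{i\in I}$ and every object $B$, the canonical comparison maps $\coprod_i F(A_i,B)\to F(\coprod_i A_i,B)$ and $\coprod_i F(B,A_i)\to F(B,\coprod_i A_i)$ are isomorphisms; and (ii) restricted along $\iota\times\iota$ it agrees (up to natural isomorphism) with the ordinary tensor product, i.e. $F(\iota\mathscr V,\iota\mathscr W)\cong\iota(\mathscr V\otimes_{\mathbb C}\mathscr W)$ naturally in $\mathscr V,\mathscr W\in\mathrm{Mod}_{\mathbb C}$.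
   Context: $\mathrm{Mod}_{\mathbb C}$ is the category of complex vector spaces and linear maps. $\mathrm{Fam}_{\mathbb C}$ (''vector bundles over discrete spaces'') is the category whose objects $\mathscr V_X$ are pairs of a set $X$ and a family $(\mathscr V_x)_{x\in X}$ of complex vector spaces (equivalently a functor from the discrete category $X$ to $\mathrm{Mod}_{\mathbb C}$), and whose morphisms $\phi_f:\mathscr V_X\to\mathscr W_Y$ are pairs of a function $f:X\to Y$ and linear maps $\phi_x:\mathscr V_x\to\mathscr W_{f(x)}$ for all $x\in X$; composition is the evident one. Coproducts in $\mathrm{Fam}_{\mathbb C}$ are given by disjoint union of base sets with the fibers over each component unchanged. The functor $\iota:\mathrm{Mod}_{\mathbb C}\hookrightarrow\mathrm{Fam}_{\mathbb C}$ sends $\mathscr V$ to the family over the singleton set with fiber $\mathscr V$. *)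

From HB Require Import structures.
From mathcomp Require Import all_boot all_order all_algebra.
From mathcomp Require Import boolp classical_sets functions.
From mathcomp Require Import complex.
From mathcomp Require Import Rstruct.

Set Implicit Arguments.
Unset Strict Implicit.
Unset Printing Implicit Defensive.

Import GRing.Theory.
Local Open Scope ring_scope.

Notation CC := (complex Rdefinitions.R).

(* Mod_C : objects are complex vector spaces [lmodType CC], morphisms  *)
(* are linear maps [{linear V -> W}].                                  *)

(* Model: V (x) W is the subspace of the (algebraic) dual of the space *)
(* of bilinear forms V x W -> C spanned by the evaluations             *)
(* v (x) w := (b |-> b v w).  (Over a field the canonical map from the *)
(* usual quotient construction onto this subspace is an isomorphism.)  *)

Definition is_bilinear (V W : lmodType CC) (b : V -> W -> CC) : Prop :=
  (forall (w : W) (a : CC) (v1 v2 : V), b (a *: v1 + v2) w = a * b v1 w + b v2 w)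
  /\ (forall (v : V) (a : CC) (w1 w2 : W), b v (a *: w1 + w2) = a * b v w1 + b v w2).

Record bilform (V W : lmodType CC) := Bilform {
  bil_fun :> V -> W -> CC;
  bil_is_bilinear : is_bilinear bil_fun }.

Definition tens_pred (V W : lmodType CC) : {pred bilform V W -> CC} :=
  fun phi => `[< exists s : seq (CC * V * W),
      phi = fun b => \sum_(t <- s) t.1.1 * b t.1.2 t.2 >].
Arguments tens_pred : clear implicits.

Lemma tens_pred_submod_closed (V W : lmodType CC) :
  GRing.submod_closed (tens_pred V W).
Proof.
split.
  apply/asboolP; exists [::]; apply/funext => b /=.
  by rewrite big_nil.
move=> a u v /asboolP [su ->] /asboolP [sv ->]; apply/asboolP.
exists ([seq (a * t.1.1, t.1.2, t.2) | t <- su] ++ sv).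
apply/funext => b /=; rewrite big_cat big_map /=.
congr (_ + _).
transitivity (a * \sum_(t <- su) t.1.1 * b t.1.2 t.2); first by [].
rewrite mulr_sumr.
by apply: eq_bigr => t _; rewrite -mulrA.
Qed.

HB.instance Definition _ (V W : lmodType CC) :=
  GRing.isSubmodClosed.Build CC (bilform V W -> CC) (tens_pred V W) (tens_pred_submod_closed V W).

Definition tensT (V W : lmodType CC) := {phi : bilform V W -> CC | phi \in tens_pred V W}.

HB.instance Definition _ (V W : lmodType CC) := [isSub for @sval _ _ : tensT V W -> _].
HB.instance Definition _ (V W : lmodType CC) := [Choice of tensT V W by <:].
HB.instance Definition _ (V W : lmodType CC) :=
  [SubChoice_isSubLmodule of tensT V W by <:].

Definition tensor (V W : lmodType CC) : lmodType CC := tensT V W.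

Definition bil_comp_fun (V W V' W' : lmodType CC) (f : {linear V -> V'})
  (g : {linear W -> W'}) (b : bilform V' W') : V -> W -> CC :=
  fun v w => b (f v) (g w).

Lemma bil_comp_is_bilinear (V W V' W' : lmodType CC) (f : {linear V -> V'})
  (g : {linear W -> W'}) (b : bilform V' W') : is_bilinear (bil_comp_fun f g b).
Proof.
case: b => b [bl br]; rewrite /bil_comp_fun /=; split.
  by move=> w a v1 v2; rewrite linearP bl.
by move=> v a w1 w2; rewrite linearP br.
Qed.

Definition bil_comp (V W V' W' : lmodType CC) (f : {linear V -> V'})
  (g : {linear W -> W'}) (b : bilform V' W') : bilform V W :=
  Bilform (bil_comp_is_bilinear f g b).

Lemma tmap_subproof (V W V' W' : lmodType CC) (f : {linear V -> V'})
  (g : {linear W -> W'}) (t : tensor V W) :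
  (fun b => val t (bil_comp f g b)) \in tens_pred V' W'.
Proof.
case: t => phi /= /asboolP [s ->]; apply/asboolP.
exists [seq (x.1.1, f x.1.2, g x.2) | x <- s].
by apply/funext => b /=; rewrite big_map.
Qed.

Definition tmap_fun (V W V' W' : lmodType CC) (f : {linear V -> V'})
  (g : {linear W -> W'}) (t : tensor V W) : tensor V' W' :=
  exist (fun phi => phi \in tens_pred V' W') _ (tmap_subproof f g t).

Lemma tmap_is_linear (V W V' W' : lmodType CC) (f : {linear V -> V'})
  (g : {linear W -> W'}) : linear (tmap_fun f g).
Proof. by move=> a t1 t2; apply: val_inj; apply/funext => b. Qed.

HB.instance Definition _ (V W V' W' : lmodType CC) (f : {linear V -> V'})
  (g : {linear W -> W'}) :=
  GRing.isLinear.Build CC (tensor V W) (tensor V' W') _ (tmap_fun f g)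
    (tmap_is_linear f g).

Definition tmap (V W V' W' : lmodType CC) (f : {linear V -> V'})
  (g : {linear W -> W'}) : {linear tensor V W -> tensor V' W'} := tmap_fun f g.

Record famObj := FamObj {
  fbase : Type;
  ffib : fbase -> lmodType CC }.
Arguments ffib : clear implicits.
Arguments FamObj {fbase} ffib.

Record famHom (A B : famObj) := FamHom {
  hbase : fbase A -> fbase B;
  hfib : forall x : fbase A, {linear ffib A x -> ffib B (hbase x)} }.
Arguments FamHom {A B}.
Arguments hbase {A B}.
Arguments hfib {A B}.

Definition lin_id (V : lmodType CC) : {linear V -> V} := idfun.

Definition famId (A : famObj) : famHom A A :=
  FamHom (fun x => x) (fun x => lin_id (ffib A x)).

Definition lin_comp (U V W : lmodType CC) (g : {linear V -> W}) (f : {linear U -> V})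
  : {linear U -> W} := (g \o f)%FUN.

Definition famComp (A B C : famObj) (g : famHom B C) (f : famHom A B) : famHom A C :=
  FamHom (fun x => hbase g (hbase f x))
         (fun x => lin_comp (hfib g (hbase f x)) (hfib f x)).

Definition famIso (A B : famObj) (f : famHom A B) : Prop :=
  exists g : famHom B A, famComp g f = famId A /\ famComp f g = famId B.

Definition famCoprod (I : Type) (A : I -> famObj) : famObj :=
  FamObj (fun p : {i : I & fbase (A i)} => ffib (A (projT1 p)) (projT2 p)).

Definition famInj (I : Type) (A : I -> famObj) (i : I) : famHom (A i) (famCoprod A) :=
  @FamHom (A i) (famCoprod A) (fun x => existT (fun j => fbase (A j)) i x) (fun x => lin_id (ffib (A i) x)).

Definition famCopair (I : Type) (A : I -> famObj) (D : famObj)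
  (g : forall i, famHom (A i) D) : famHom (famCoprod A) D :=
  @FamHom (famCoprod A) D (fun p => hbase (g (projT1 p)) (projT2 p))
         (fun p => hfib (g (projT1 p)) (projT2 p)).

Definition iotaObj (V : lmodType CC) : famObj := FamObj (fun _ : unit => V).
Definition iotaHom (V W : lmodType CC) (f : {linear V -> W}) :
  famHom (iotaObj V) (iotaObj W) := @FamHom (iotaObj V) (iotaObj W) (fun x => x) (fun _ => f).

Definition Fam2ObjMap := famObj -> famObj -> famObj.
Definition Fam2HomMap (F : Fam2ObjMap) :=
  forall A B A' B', famHom A A' -> famHom B B' -> famHom (F A B) (F A' B').

Definition isFunctor2 (F : Fam2ObjMap) (Fh : Fam2HomMap F) : Prop :=
  (forall A B, Fh A B A B (famId A) (famId B) = famId (F A B)) /\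
  (forall A B A' B' A'' B'' (f : famHom A A') (g : famHom B B')
          (f' : famHom A' A'') (g' : famHom B' B''),
      Fh A B A'' B'' (famComp f' f) (famComp g' g)
      = famComp (Fh A' B' A'' B'' f' g') (Fh A B A' B' f g)).

Definition natIso2 (F : Fam2ObjMap) (Fh : Fam2HomMap F)
                   (G : Fam2ObjMap) (Gh : Fam2HomMap G) : Prop :=
  exists eta : forall A B, famHom (F A B) (G A B),
    (forall A B, famIso (eta A B)) /\
    (forall A B A' B' (f : famHom A A') (g : famHom B B'),
       famComp (eta A' B') (Fh A B A' B' f g) = famComp (Gh A B A' B' f g) (eta A B)).

Definition distributes_coprod (F : Fam2ObjMap) (Fh : Fam2HomMap F) : Prop :=
  forall (I : Type) (A : I -> famObj) (B : famObj),
    famIso (famCopair (fun i => Fh (A i) B (famCoprod A) B (famInj A i) (famId B)))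
    /\ famIso (famCopair (fun i => Fh B (A i) B (famCoprod A) (famId B) (famInj A i))).

Definition restricts_to_tensor (F : Fam2ObjMap) (Fh : Fam2HomMap F) : Prop :=
  exists eta : forall V W : lmodType CC,
      famHom (F (iotaObj V) (iotaObj W)) (iotaObj (tensor V W)),
    (forall V W, famIso (eta V W)) /\
    (forall (V W V' W' : lmodType CC) (f : {linear V -> V'}) (g : {linear W -> W'}),
       famComp (eta V' W') (Fh _ _ _ _ (iotaHom f) (iotaHom g))
       = famComp (iotaHom (tmap f g)) (eta V W)).

Definition boxtimes : Fam2ObjMap := fun A B =>
  FamObj (fun p : fbase A * fbase B => tensor (ffib A p.1) (ffib B p.2)).

Definition boxtimesHom : Fam2HomMap boxtimes := fun A B A' B' f g =>
  @FamHom (boxtimes A B) (boxtimes A' B') (fun p : fbase A * fbase B => (hbase f p.1, hbase g p.2))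
         (fun p => tmap (hfib f p.1) (hfib g p.2)).

From HB Require Import structures.
From mathcomp Require Import all_boot all_order all_algebra.
From mathcomp Require Import boolp classical_sets functions.
From mathcomp Require Import complex.
From mathcomp Require Import Rstruct.

(* Every family A over X is the coproduct of the one-point families iota A_x,
   x in X.  If F distributes over coproducts in each variable, F(A, B) is
   therefore the coproduct over (x, y) of F(iota A_x, iota B_y), which (ii)
   identifies with iota (A_x (x) B_y); re-indexed, this coproduct is A [x] B.
   The comparison A [x] B -> F(A, B) so obtained is natural because a morphism
   out of A [x] B is determined by its restrictions to the points (x, y). *)

Set Implicit Arguments.
Unset Strict Implicit.
Unset Printing Implicit Defensive.

Lemma eq_lin (U V : lmodType CC) (f g : {linear U -> V}) : f =1 g -> f = g.
Proof.
case: f g => [f cf] [g cg] /= /funext fg; subst g.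
case: cf => [[a1] [s1]]; case: cg => [[a2] [s2]].
by rewrite (Prop_irrelevance a1 a2) (Prop_irrelevance s1 s2).
Qed.

Lemma famHomP (A B : famObj) (f g : famHom A B) :
  (forall x, exists e : hbase f x = hbase g x,
     forall v, eq_rect _ (ffib B) (hfib f x v) _ e = hfib g x v) <-> f = g.
Proof.
split=> [fg | -> x]; last by exists erefl.
case: f g fg => [bf pf] [bg pg] /= fg.
have ebf : bf = bg by apply: funext => x; case: (fg x).
subst bg; congr FamHom; apply: functional_extensionality_dep => x.
apply: eq_lin => v; case: (fg x) => e <-.
by rewrite (Prop_irrelevance e erefl).
Qed.

Lemma eq_famHom_fib (A B : famObj) (hb : fbase A -> fbase B)
    (p q : forall x, {linear ffib A x -> ffib B (hb x)}) :
  (forall x v, p x v = q x v) -> FamHom hb p = FamHom hb q.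
Proof. by move=> pq; apply/famHomP => x; exists erefl; apply: pq. Qed.

Local Notation "g \oF f" := (famComp g f) (at level 40, left associativity).

Section FamCategory.

Implicit Types A B C D : famObj.

Lemma famCompA A B C D (h : famHom C D) (g : famHom B C) (f : famHom A B) :
  h \oF (g \oF f) = h \oF g \oF f.
Proof. by case: f => bf pf; apply: eq_famHom_fib. Qed.

Lemma famComp_idl A B (f : famHom A B) : famId B \oF f = f.
Proof. by case: f => bf pf; apply: eq_famHom_fib. Qed.

Lemma famComp_idr A B (f : famHom A B) : f \oF famId A = f.
Proof. by case: f => bf pf; apply: eq_famHom_fib. Qed.

Lemma famIso_comp A B C (g : famHom B C) (f : famHom A B) :
  famIso f -> famIso g -> famIso (g \oF f).
Proof.
move=> [f' [f'f ff']] [g' [g'g gg']]; exists (f' \oF g'); split.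
  by rewrite famCompA -(famCompA f') g'g famComp_idr f'f.
by rewrite famCompA -(famCompA g) ff' famComp_idr gg'.
Qed.

Definition famInv A B (f : famHom A B) (isof : famIso f) : famHom B A :=
  sval (cid isof).

Section Inverse.

Variables (A B : famObj) (f : famHom A B) (isof : famIso f).

Lemma famComp_invl : famInv isof \oF f = famId A.
Proof. exact: (proj1 (svalP (cid isof))). Qed.

Lemma famComp_invr : f \oF famInv isof = famId B.
Proof. exact: (proj2 (svalP (cid isof))). Qed.

Lemma famIso_inv : famIso (famInv isof).
Proof. by exists f; rewrite famComp_invl famComp_invr. Qed.

End Inverse.

Lemma famInv_square A B C D (u : famHom A B) (v : famHom C D)
    (k : famHom B D) (h : famHom A C) (isou : famIso u) (isov : famIso v) :
  k \oF u = v \oF h -> famInv isov \oF k = h \oF famInv isou.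
Proof.
move=> kuvh; rewrite -[LHS]famComp_idr -(famComp_invr isou) !famCompA.
by rewrite -(famCompA _ k) kuvh famCompA famComp_invl famComp_idl.
Qed.

End FamCategory.

Section Functor2.

Variables (F : Fam2ObjMap) (Fh : Fam2HomMap F).
Hypothesis Fh_functor : isFunctor2 Fh.

Lemma functor2_comp A B A' B' A'' B'' (f : famHom A A') (g : famHom B B')
    (f' : famHom A' A'') (g' : famHom B' B'') :
  Fh f' g' \oF Fh f g = Fh (f' \oF f) (g' \oF g).
Proof. by rewrite (proj2 Fh_functor). Qed.

Lemma functor2_iso A B A' B' (f : famHom A A') (g : famHom B B') :
  famIso f -> famIso g -> famIso (Fh f g).
Proof.
move=> [f' [f'f ff']] [g' [g'g gg']]; exists (Fh f' g').
by rewrite !functor2_comp f'f ff' g'g gg' !(proj1 Fh_functor).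
Qed.

End Functor2.

Definition famCoprodMap (I : Type) (C D : I -> famObj)
    (h : forall i, famHom (C i) (D i)) : famHom (famCoprod C) (famCoprod D) :=
  @FamHom (famCoprod C) (famCoprod D)
    (fun p => existT (fun i => fbase (D i)) (projT1 p) (hbase (h (projT1 p)) (projT2 p)))
    (fun p => hfib (h (projT1 p)) (projT2 p)).

Section Coproducts.

Variables (I : Type) (C D E : I -> famObj).

Lemma famCopair_inj (G : famObj) (g : forall i, famHom (C i) G) i :
  famCopair g \oF famInj C i = g i.
Proof. by apply/famHomP => x; exists erefl. Qed.

Lemma famCopair_comp (G : famObj) (g : forall i, famHom (D i) G)
    (h : forall i, famHom (C i) (D i)) :
  famCopair (fun i => g i \oF h i) = famCopair g \oF famCoprodMap h.
Proof. exact: eq_famHom_fib. Qed.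

Lemma famCoprodMap_comp (g : forall i, famHom (D i) (E i))
    (h : forall i, famHom (C i) (D i)) :
  famCoprodMap g \oF famCoprodMap h = famCoprodMap (fun i => g i \oF h i).
Proof. exact: eq_famHom_fib. Qed.

Lemma famCoprodMap_id : famCoprodMap (fun i => famId (C i)) = famId (famCoprod C).
Proof. by apply/famHomP => -[i x]; exists erefl. Qed.

End Coproducts.

Lemma famCoprodMap_iso (I : Type) (C D : I -> famObj)
    (h : forall i, famHom (C i) (D i)) :
  (forall i, famIso (h i)) -> famIso (famCoprodMap h).
Proof.
move=> isoh; exists (famCoprodMap (fun i => famInv (isoh i))).
rewrite !famCoprodMap_comp; split.
- rewrite -famCoprodMap_id; congr famCoprodMap.
  by apply: functional_extensionality_dep => i; rewrite famComp_invl.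
- rewrite -famCoprodMap_id; congr famCoprodMap.
  by apply: functional_extensionality_dep => i; rewrite famComp_invr.
Qed.

Section Fibers.

Variable A : famObj.

Definition fiberCoprod : famObj := famCoprod (fun x => iotaObj (ffib A x)).

Definition fiberInj (x : fbase A) : famHom (iotaObj (ffib A x)) fiberCoprod :=
  famInj (fun x => iotaObj (ffib A x)) x.

Definition fiberPoint (x : fbase A) : famHom (iotaObj (ffib A x)) A :=
  @FamHom (iotaObj (ffib A x)) A (fun _ => x) (fun _ => lin_id (ffib A x)).

Definition fiberCopair : famHom fiberCoprod A := famCopair fiberPoint.

Lemma fiberCopair_inj x : fiberCopair \oF fiberInj x = fiberPoint x.
Proof. by apply/famHomP => t; exists erefl. Qed.

Lemma fiberCopair_iso : famIso fiberCopair.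
Proof.
exists (@FamHom A fiberCoprod (fun x => existT (fun x => unit) x tt)
                                (fun x => lin_id (ffib A x))).
by split; apply/famHomP; [case=> x [] | move=> x]; exists erefl.
Qed.

End Fibers.

Arguments fiberInj : clear implicits.
Arguments fiberPoint : clear implicits.

Lemma fiberPoint_nat (A A' : famObj) (f : famHom A A') x :
  f \oF fiberPoint A x = fiberPoint A' (hbase f x) \oF iotaHom (hfib f x).
Proof. exact: eq_famHom_fib. Qed.

Section BoxtimesPoints.

Variables A B : famObj.

Definition boxCell x y := iotaObj (tensor (ffib A x) (ffib B y)).

Definition boxPoint x y : famHom (boxCell x y) (boxtimes A B) :=
  @FamHom (boxCell x y) (boxtimes A B)
    (fun _ => (x, y)) (fun _ => lin_id (tensor (ffib A x) (ffib B y))).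

Definition boxRow x := famCoprod (boxCell x).

Definition boxGrid := famCoprod boxRow.

Definition boxGrid_split : famHom (boxtimes A B) boxGrid :=
  @FamHom (boxtimes A B) boxGrid
    (fun p => existT (fun x => {y : fbase B & unit}) p.1 (existT (fun _ => unit) p.2 tt))
    (fun p => lin_id (tensor (ffib A p.1) (ffib B p.2))).

Lemma boxGrid_split_iso : famIso boxGrid_split.
Proof.
exists (@FamHom boxGrid (boxtimes A B) (fun p => (projT1 p, projT1 (projT2 p)))
  (fun p => lin_id (tensor (ffib A (projT1 p)) (ffib B (projT1 (projT2 p)))))).
by split; apply/famHomP; [case=> x y | case=> x [y []]]; exists erefl.
Qed.

Lemma boxGrid_split_point x y :
  boxGrid_split \oF boxPoint x y = famInj boxRow x \oF famInj (boxCell x) y.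
Proof. by apply/famHomP => -[]; exists erefl. Qed.

Lemma boxtimes_hom_ext (G : famObj) (h h' : famHom (boxtimes A B) G) :
  (forall x y, h \oF boxPoint x y = h' \oF boxPoint x y) -> h = h'.
Proof.
move=> hh'; apply/famHomP => -[x y].
by have [e He] := (famHomP _ _).2 (hh' x y) tt; exists e.
Qed.

End BoxtimesPoints.

Arguments boxPoint : clear implicits.
Arguments boxRow : clear implicits.
Arguments boxGrid_split : clear implicits.

Lemma boxPoint_nat (A B A' B' : famObj) (f : famHom A A') (g : famHom B B') x y :
  boxtimesHom f g \oF boxPoint A B x y
  = boxPoint A' B' (hbase f x) (hbase g y) \oF iotaHom (tmap (hfib f x) (hfib g y)).
Proof. by apply/famHomP => -[]; exists erefl. Qed.

Lemma eq_bilform (V W : lmodType CC) (b1 b2 : bilform V W) :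
  (forall v w, b1 v w = b2 v w) -> b1 = b2.
Proof.
case: b1 b2 => [f1 p1] [f2 p2] /= f12.
have ef : f1 = f2 by apply: funext => v; apply: funext.
by subst f2; rewrite (Prop_irrelevance p1 p2).
Qed.

Lemma tmap_id (V W : lmodType CC) (t : tensor V W) :
  tmap (lin_id V) (lin_id W) t = t.
Proof. by apply: val_inj; apply: funext => b /=; congr (sval t); apply: eq_bilform. Qed.

Lemma tmap_comp (U V W U' V' W' : lmodType CC)
    (f : {linear U -> V}) (f' : {linear V -> W})
    (g : {linear U' -> V'}) (g' : {linear V' -> W'}) (t : tensor U U') :
  tmap (lin_comp f' f) (lin_comp g' g) t = tmap f' g' (tmap f g t).
Proof. by apply: val_inj; apply: funext => b /=; congr (sval t); apply: eq_bilform. Qed.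

Lemma boxtimes_functor : isFunctor2 boxtimesHom.
Proof.
split=> [A B | A B A' B' A'' B'' f g f' g']; apply/famHomP => -[x y]; exists erefl.
  exact: tmap_id.
exact: tmap_comp.
Qed.

Lemma boxtimes_distributes : distributes_coprod boxtimesHom.
Proof.
move=> I A B; split.
- exists (@FamHom (boxtimes (famCoprod A) B) (famCoprod (fun i => boxtimes (A i) B))
    (fun p => existT (fun i => (fbase (A i) * fbase B)%type) (projT1 p.1) (projT2 p.1, p.2))
    (fun p => lin_id _)).
  by split; apply/famHomP; [case=> i [a b] | case=> [[i a] b]]; exists erefl; apply: tmap_id.
- exists (@FamHom (boxtimes B (famCoprod A)) (famCoprod (fun i => boxtimes B (A i)))
    (fun p => existT (fun i => (fbase B * fbase (A i))%type) (projT1 p.2) (p.1, projT2 p.2))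
    (fun p => lin_id _)).
  by split; apply/famHomP; [case=> i [b a] | case=> b [i a]]; exists erefl; apply: tmap_id.
Qed.

Lemma boxtimes_restricts : restricts_to_tensor boxtimesHom.
Proof.
exists (fun V W => @FamHom (boxtimes (iotaObj V) (iotaObj W)) (iotaObj (tensor V W))
   (fun _ => tt) (fun _ => lin_id (tensor V W))).
split=> [V W | V W V' W' f g]; last by apply/famHomP => -[[] []]; exists erefl.
exists (@FamHom (iotaObj (tensor V W)) (boxtimes (iotaObj V) (iotaObj W))
   (fun _ => (tt, tt)) (fun _ => lin_id (tensor V W))).
by split; apply/famHomP; [case=> [[] []] | case]; exists erefl.
Qed.

Section Comparison.

Variables (F : Fam2ObjMap) (Fh : Fam2HomMap F).
Hypotheses (Fh_functor : isFunctor2 Fh) (Fh_distr : distributes_coprod Fh).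
Variable eps : forall V W : lmodType CC,
  famHom (iotaObj (tensor V W)) (F (iotaObj V) (iotaObj W)).
Hypothesis eps_iso : forall V W, famIso (eps V W).
Hypothesis eps_nat : forall (V W V' W' : lmodType CC)
    (f : {linear V -> V'}) (g : {linear W -> W'}),
  eps V' W' \oF iotaHom (tmap f g) = Fh (iotaHom f) (iotaHom g) \oF eps V W.

Definition rowCmp A B x : famHom (boxRow A B x) (F (iotaObj (ffib A x)) (fiberCoprod B)) :=
  famCopair (fun y => Fh (famId _) (fiberInj B y) \oF eps (ffib A x) (ffib B y)).
Arguments rowCmp : clear implicits.

Definition gridCmp A B : famHom (boxGrid A B) (F (fiberCoprod A) (fiberCoprod B)) :=
  famCopair (fun x => Fh (fiberInj A x) (famId _) \oF rowCmp A B x).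

Definition boxCmp A B : famHom (boxtimes A B) (F A B) :=
  Fh (fiberCopair A) (fiberCopair B) \oF gridCmp A B \oF boxGrid_split A B.

Lemma boxCmp_iso A B : famIso (boxCmp A B).
Proof.
apply: famIso_comp; first exact: boxGrid_split_iso.
apply: famIso_comp; last exact: functor2_iso (fiberCopair_iso A) (fiberCopair_iso B).
rewrite /gridCmp famCopair_comp; apply: famIso_comp; last exact: (Fh_distr _ _).1.
apply: famCoprodMap_iso => x.
rewrite /rowCmp famCopair_comp; apply: famIso_comp; last exact: (Fh_distr _ _).2.
by apply: famCoprodMap_iso => y; apply: eps_iso.
Qed.

Lemma boxCmp_point A B x y :
  boxCmp A B \oF boxPoint A B x y = Fh (fiberPoint A x) (fiberPoint B y) \oF eps _ _.
Proof.
rewrite /boxCmp -famCompA boxGrid_split_point famCompA -(famCompA (Fh _ _)).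
rewrite famCopair_inj -!famCompA famCopair_inj !famCompA !functor2_comp //.
by rewrite !famComp_idr !fiberCopair_inj.
Qed.

Lemma boxCmp_nat A B A' B' (f : famHom A A') (g : famHom B B') :
  Fh f g \oF boxCmp A B = boxCmp A' B' \oF boxtimesHom f g.
Proof.
apply: boxtimes_hom_ext => x y.
rewrite -famCompA boxCmp_point famCompA functor2_comp // !fiberPoint_nat.
rewrite -functor2_comp // -famCompA -eps_nat.
by rewrite -famCompA boxPoint_nat famCompA [RHS]famCompA boxCmp_point.
Qed.

End Comparison.

Lemma natIso2_boxtimes (F : Fam2ObjMap) (Fh : Fam2HomMap F) :
  isFunctor2 Fh -> distributes_coprod Fh -> restricts_to_tensor Fh ->
  natIso2 Fh boxtimesHom.
Proof.
move=> Fh_functor Fh_distr [eta [eta_iso eta_nat]].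
pose eps V W := famInv (eta_iso V W).
have eps_iso V W : famIso (eps V W) by apply: famIso_inv.
have eps_nat (V W V' W' : lmodType CC) (f : {linear V -> V'}) (g : {linear W -> W'}) :
    eps V' W' \oF iotaHom (tmap f g) = Fh _ _ _ _ (iotaHom f) (iotaHom g) \oF eps V W.
  by apply: famInv_square; rewrite eta_nat.
exists (fun A B => famInv (boxCmp_iso Fh_functor Fh_distr eps_iso A B)).
split=> [A B | A B A' B' f g]; first exact: famIso_inv.
exact/famInv_square/(boxCmp_nat Fh_functor eps_nat).
Qed.

Theorem mainTheorem1 :
  (* the external tensor product is a functor satisfying (i) and (ii) *)
  (isFunctor2 boxtimesHom /\ distributes_coprod boxtimesHom
   /\ restricts_to_tensor boxtimesHom)
  /\
  (* and any functor satisfying (i) and (ii) is naturally isomorphic to it *)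
  (forall (F : Fam2ObjMap) (Fh : Fam2HomMap F),
     isFunctor2 Fh -> distributes_coprod Fh -> restricts_to_tensor Fh ->
     natIso2 Fh boxtimesHom).
Proof.
split; last exact: natIso2_boxtimes.
split; first exact: boxtimes_functor.
by split; [exact: boxtimes_distributes | exact: boxtimes_restricts].
Qed.
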